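(* Let $F\subsetneq K$ be fields of characteristic $0$, with $F$ a proper nonempty subfield of $K$. Let $q(x)=\sum_{j=0}^{m}b_j x^j\in F[x]$ be non-constant with $b_m\neq 0$, and let $p(x)=\sum_{k=0}^{n}a_k x^k\in K[x]$ with $a_n\neq 0$. If $p\circ q\in F[x]$, then $p\in F[x]$.
   Context: $F[x]$ denotes the set of polynomials with all coefficients in $F$. *)

From HB Require Import structures.
From mathcomp Require Import all_boot all_order all_algebra.
Set Implicit Arguments. Unset Strict Implicit. Unset Printing Implicit Defensive.

From HB Require Import structures.
From mathcomp Require Import all_boot all_order all_algebra.
Import GRing.Theory.
Local Open Scope ring_scope.

(* The leading coefficient of p \Po q is lead_coef p * lead_coef q ^+ deg p,
   so it lies in F together with lead_coef q.  Hence subtracting the leading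
   monomial of p keeps p \Po q over F and lowers the degree of p, and an
   induction on the size of p concludes. *)

Lemma drop_poly_size_pred (R : nzRingType) (p : {poly R}) :
  drop_poly (size p).-1 p = (lead_coef p)%:P.
Proof.
apply/polyP => -[|i]; rewrite coef_drop_poly coefC ?lead_coefE //=.
by apply: nth_default; rewrite addSn (leq_trans (leqSpred _)) // ltnS leq_addl.
Qed.

Lemma take_poly_add_lead (R : nzRingType) (p : {poly R}) :
  take_poly (size p).-1 p + lead_coef p *: 'X^((size p).-1) = p.
Proof. by rewrite -mul_polyC -drop_poly_size_pred poly_take_drop. Qed.

Section PolyOverComp.

Variables (K : fieldType) (F : divringClosed K) (q : {poly K}).
Hypotheses (qF : q \is a polyOver F) (size_q_gt1 : (1 < size q)%N).

Lemma lead_coef_polyOver (p : {poly K}) :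
  p \is a polyOver F -> lead_coef p \in F.
Proof. by move/polyOverP; rewrite lead_coefE. Qed.

Lemma lead_coef_comp_polyOver (p : {poly K}) :
  p \Po q \is a polyOver F -> lead_coef p \in F.
Proof.
move=> /lead_coef_polyOver; rewrite lead_coef_comp //.
have lqF : lead_coef q ^+ (size p).-1 \in F by rewrite rpredX ?lead_coef_polyOver.
have lq_nz : lead_coef q ^+ (size p).-1 != 0.
  by rewrite expf_neq0 // lead_coef_eq0 -size_poly_gt0 ltnW.
by move=> lpqF; rewrite -(mulfK lq_nz (lead_coef p)) rpred_div.
Qed.

Lemma polyOver_comp_inv (p : {poly K}) :
  p \Po q \is a polyOver F -> p \is a polyOver F.
Proof.
have [n] := ubnP (size p); elim: n p => // n IHn p; rewrite ltnS => size_p pqF.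
have [-> | p_nz] := eqVneq p 0; first exact: polyOver0.
have cF : lead_coef p \in F by exact: lead_coef_comp_polyOver.
set t := take_poly (size p).-1 p.
have tF : t \is a polyOver F.
  apply: IHn.
    by rewrite (leq_ltn_trans (size_take_poly _ _)) // prednK ?size_poly_gt0.
  rewrite -[p]take_poly_add_lead comp_polyD comp_polyZ comp_Xn_poly in pqF.
  by rewrite -(addrK (lead_coef p *: q ^+ (size p).-1) (t \Po q)) rpredB
       ?polyOverZ ?rpredX.
by rewrite -[p]take_poly_add_lead rpredD ?polyOverZ ?polyOverXn.
Qed.

End PolyOverComp.

Theorem lemma12 (K : fieldType) (F : divringClosed K)
    (charK0 : [pchar K] =i pred0)
    (properF : exists x : K, x \notin F)
    (q p : {poly K})
    (qF : q \is a polyOver F) (q_nonconst : (1 < size q)%N)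
    (p_nz : p != 0)
    (pqF : p \Po q \is a polyOver F) :
  p \is a polyOver F.
Proof. exact: polyOver_comp_inv qF q_nonconst p pqF. Qed.
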